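(* Let $Q$ be a non-negative matrix on a countable set $S$ with finite Green's function and let $\nu$ be a $Q$-excessive measure with one-sided Kuznetsov measure $\mathcal K^\nu$. For every measurable set $A\subset\mathcal W$, $n\in\mathbb N$, $B\subset S^{n+1}$ and $x\in S$, $$\mathcal K^\nu\big((X_{m-n})_{m\in-\mathbb N_0}\in A,\ X_{-n}=x,\ (X_{-n},\dots,X_0)\in B\big)=\mathcal K^\nu(A\cap\{X_0=x\})\,\mathcal Q^x_n(B).$$
   Context: $Q=(q_{x,y})_{x,y\in S}$ non-negative with $G=\sum_{n\ge0}Q^n$ finite entrywise. A measure $\nu$ on $S$ finite at every point is $Q$-excessive if $\sum_y\nu(y)q_{y,x}\le\nu(x)$ for all $x$; $\nu^{\mathrm{pot}}(x)=\nu(x)-\sum_y\nu(y)q_{y,x}$. $\mathcal W$ is the set of sequences $(x_n)_{n\in-\mathbb N_0}\in(S\cup\{\partial\})^{-\mathbb N_0}$ ($\partial\notin S$) for which some $\alpha\in-\mathbb N_0\cup\{-\infty\}$ satisfies $x_n\in S\iff\alpha\le n$; $X_n$ are the coordinates; product σ-field. The one-sided Kuznetsov measure $\mathcal K^\nu$ is the measure on $\mathcal W$ with $\mathcal K^\nu(\{(\dots,\partial,x_{-k},\dots,x_0)\})=\nu^{\mathrm{pot}}(x_{-k})q_{x_{-k},x_{-k+1}}\cdots q_{x_{-1},x_0}$ and $\mathcal K^\nu(X_{-k}=x_{-k},\dots,X_0=x_0)=\nu(x_{-k})q_{x_{-k},x_{-k+1}}\cdots q_{x_{-1},x_0}$ for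 all $k\in\mathbb N$, $x_{-k},\dots,x_0\in S$. For $x\in S$ and $n\in\mathbb N_0$, $\mathcal Q^x_n$ is the measure on $S^{n+1}$ with $\mathcal Q^x_n(\{(x_0,\dots,x_n)\})=\mathbf 1_{\{x=x_0\}}q_{x_0,x_1}\cdots q_{x_{n-1},x_n}$. *)

From HB Require Import structures.
From mathcomp Require Import all_boot all_order all_algebra.
From mathcomp Require Import all_classical all_reals all_analysis.
Set Implicit Arguments. Unset Strict Implicit. Unset Printing Implicit Defensive.
Import Order.TTheory GRing.Theory Num.Theory.
Local Open Scope classical_set_scope.
Local Open Scope ring_scope.
Local Open Scope ereal_scope.

(* Paths: a path w : nat -> option S encodes (x_n)_{n in -N_0} via
   w k = X_{-k}, with None standing for the cemetery point \partial. *)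
Definition path (S : Type) := nat -> option S.

(* The set W of admissible paths: there is alpha in -N_0 \cup {-oo} with
   x_n in S <-> alpha <= n.  In the index k = -n this means: either all
   coordinates are in S (alpha = -oo), or there is a (= -alpha) with
   X_{-k} in S <-> k <= a. *)
Definition Wset (S : Type) : set (path S) :=
  [set w | (forall k, w k <> None) \/
           exists a : nat, forall k, w k <> None <-> (k <= a)%N].

Definition cyl (S : Type) : set (set (path S)) :=
  [set C | exists k (b : option S), C = [set w : path S | w k = b]].

Definition Paths (S : Type) := g_sigma_algebraType (@cyl S).

Definition X (S : Type) (k : nat) (w : Paths S) : option S := w k.

(* Time shift: (X_{m-n})_{m in -N_0}. *)
Definition shiftp (S : Type) (n : nat) (w : Paths S) : Paths S :=
  fun k => w (k + n)%N.

Fixpoint Qpow (R : realType) (S : choiceType) (q : S -> S -> R) (n : nat)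
  (x y : S) : \bar R :=
  match n with
  | O => (if `[< x = y >] then 1 else 0)%:E
  | n'.+1 => \esum_(z in [set: S]) (Qpow q n' x z * (q z y)%:E)
  end.

Definition green (R : realType) (S : choiceType) (q : S -> S -> R) (x y : S)
  : \bar R := \sum_(0 <= n <oo) Qpow q n x y.

Definition nuQ (R : realType) (S : choiceType) (q : S -> S -> R) (nu : S -> R)
  (x : S) : \bar R := \esum_(y in [set: S]) ((nu y)%:E * (q y x)%:E).

Definition excessive (R : realType) (S : choiceType) (q : S -> S -> R)
  (nu : S -> R) : Prop :=
  (forall x, 0 <= nu x)%R /\ forall x, nuQ q nu x <= (nu x)%:E.

Definition nupot (R : realType) (S : choiceType) (q : S -> S -> R) (nu : S -> R)
  (x : S) : \bar R := (nu x)%:E - nuQ q nu x.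

(* The product q_{x_{-k},x_{-k+1}} ... q_{x_{-1},x_0} where f i = x_{-i}. *)
Definition pathprod (R : realType) (S : Type) (q : S -> S -> R)
  (k : nat) (f : nat -> S) : R := (\prod_(i < k) q (f i.+1) (f i))%R.

Definition is_kuznetsov (R : realType) (S : choiceType) (q : S -> S -> R)
  (nu : S -> R) (K : set (Paths S) -> \bar R) : Prop :=
  (forall (k : nat) (f : nat -> S),
      K (@Wset S `&` [set w | (forall i, (i <= k)%N -> X i w = Some (f i))
                              /\ X k.+1 w = None])
      = nupot q nu (f k) * (pathprod q k f)%:E) /\
  (forall (k : nat) (f : nat -> S),
      K (@Wset S `&` [set w | forall i, (i <= k)%N -> X i w = Some (f i)])
      = (nu (f k))%:E * (pathprod q k f)%:E).

Definition Qxn (R : realType) (S : choiceType) (q : S -> S -> R) (x : S) (n : nat)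
  (B : set ('I_n.+1 -> S)) : \bar R :=
  \esum_(t in B)
    (if `[< t ord0 = x >] then
       (\prod_(i < n) q (t (inord i)) (t (inord i.+1)))%:E
     else 0).

From HB Require Import structures.
From mathcomp Require Import all_boot all_order all_algebra.
From mathcomp Require Import all_classical all_reals all_analysis.
From mathcomp Require Import zify.
Set Implicit Arguments.
Unset Strict Implicit.
Unset Printing Implicit Defensive.
Import Order.TTheory GRing.Theory Num.Theory.
Local Open Scope classical_set_scope.
Local Open Scope ring_scope.
Local Open Scope ereal_scope.

(* Split the event according to the segment t = (X_{-n}, ..., X_0) in B; the
   pieces are disjoint and countably many, so it suffices to treat one t with
   t_0 = x.  For such t, A |-> K^nu(X_{-n..0} = t, theta_n^{-1} A) and
   A |-> q(t) K^nu(X_0 = x, A) are finite measures that agree on cylinders: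
   prepending the segment t to a cylinder multiplies both defining formulas of
   K^nu (surviving and killed paths) by the product q(t) of the weights along
   t.  Cylinders form a pi-system generating the product sigma-field, so the
   two measures coincide. *)

Lemma esumZl (R : realType) (T : choiceType) (D : set T) (a : T -> \bar R)
    (r : R) : (0 <= r)%R -> (forall i, D i -> 0 <= a i) ->
  \esum_(i in D) (r%:E * a i) = r%:E * \esum_(i in D) a i.
Proof.
move=> r0 a0; rewrite /esum -(ereal_supZl _ r0); last first.
  by apply/set0P; exists 0; exists set0; [exact: fsets_set0|exact: fsbig_set0].
f_equal.
have distr F : fsets D F ->
    \sum_(i \in F) (r%:E * a i) = r%:E * \sum_(i \in F) a i.
  move=> [finF FD]; rewrite !fsbig_finite // big_seq [in RHS]big_seq.
  by rewrite ge0_sume_distrr // => i; rewrite in_fset_set // inE => /FD/a0.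
apply/seteqP; split => [_ [F DF <-]|_ [_ [F DF <-] <-]].
  by exists (\sum_(i \in F) a i); [exists F|rewrite distr].
by exists F => //; rewrite distr.
Qed.

Lemma countable_image_nat (I : Type) (D : set I) : countable D -> D !=set0 ->
  exists (N : set nat) (e : nat -> I), set_inj N e /\ D = e @` N.
Proof.
move=> /countable_injP[f injf] [i0 Di0].
pose e := 'pinv_(fun=> i0) D f.
have fK : {in D, cancel f e} := @pinvKV I nat (fun=> i0) D f injf.
exists (f @` D), e; split.
  by move=> _ _ /set_mem[i Di <-] /set_mem[j Dj <-]; rewrite !fK ?inE // => ->.
apply/seteqP; split => [i Di|_ [_ [i Di <-] <-]]; last by rewrite fK ?inE.
by exists (f i); [exists i|rewrite fK ?inE].
Qed.

Lemma measure_bigcup_countable d (T : measurableType d) (R : realType)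
    (mu : {measure set T -> \bar R}) (I : choiceType) (D : set I)
    (F : I -> set T) :
  countable D -> (forall i, D i -> measurable (F i)) -> trivIset D F ->
  mu (\bigcup_(i in D) F i) = \esum_(i in D) mu (F i).
Proof.
move=> cD mF tF; have [->|/set0P D0] := eqVneq D set0.
  by rewrite bigcup_set0 esum_set0 measure0.
have [N [e [inj_e DE]]] := countable_image_nat cD D0; subst D.
have {}mF m : N m -> measurable (F (e m)).
  by move=> Nm; apply: mF; apply: imageP.
rewrite bigcup_image measure_bigcup ?esum_set_image //.
apply/trivIsetP => m m' Nm Nm' mm'; move/trivIsetP: tF; apply.
- exact: imageP.
- exact: imageP.
- by apply: contra_neq mm'; apply: inj_e; rewrite inE.
Qed.

Lemma countable_fin_fun (I : finType) (T : countType) (B : set (I -> T)) :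
  countable B.
Proof.
apply/countable_injP; exists (fun t => pickle [ffun i => t i]).
move=> t1 t2 _ _ /(pcan_inj pickleK)/ffunP h; apply/funext => i.
by have := h i; rewrite !ffunE.
Qed.

Definition splice (T : Type) (n : nat) (u v : nat -> T) (i : nat) : T :=
  if (i < n)%N then u i else v (i - n)%N.

Lemma splice_lt (T : Type) n (u v : nat -> T) i :
  (i < n)%N -> splice n u v i = u i.
Proof. by rewrite /splice => ->. Qed.

Lemma splice_ge (T : Type) n (u v : nat -> T) i :
  (n <= i)%N -> splice n u v i = v (i - n)%N.
Proof. by rewrite /splice ltnNge => ->. Qed.

Lemma pathprod_ge0 (R : realType) (S : Type) (q : S -> S -> R) k f :
  (forall x y, 0 <= q x y)%R -> (0 <= pathprod q k f)%R.
Proof. by move=> hq; apply: prodr_ge0 => i _; exact: hq. Qed.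

Lemma pathprod_splice (R : realType) (S : Type) (q : S -> S -> R) n k
    (u f : nat -> S) : f 0%N = u n ->
  pathprod q (n + k) (splice n u f) = (pathprod q n u * pathprod q k f)%R.
Proof.
move=> f0; rewrite /pathprod big_split_ord /=; congr (_ * _)%R.
  apply: eq_bigr => i _; rewrite [splice n u f i]splice_lt //.
  case: (ltnP i.+1 n) => [lt|ni]; first by rewrite splice_lt.
  have -> : i.+1 = n by apply/eqP; rewrite eqn_leq ni ltn_ord.
  by rewrite splice_ge // subnn f0.
apply: eq_bigr => i _.
by rewrite !splice_ge ?leq_addr -?addnS ?leq_addr // !addKn.
Qed.

Lemma pathprod_rev (R : realType) (S : Type) (q : S -> S -> R) n
    (t : 'I_n.+1 -> S) :
  pathprod q n (fun i => t (inord (n - i))) =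
  (\prod_(i < n) q (t (inord i)) (t (inord i.+1)))%R.
Proof.
rewrite /pathprod.
rewrite -(big_mkord xpredT (fun i => q (t (inord i)) (t (inord i.+1)))).
rewrite big_rev_mkord subn0; apply: eq_bigr => i _.
by have -> : ((n - i.+1).+1 = n - i)%N by have := ltn_ord i; lia.
Qed.

Section path_space.
Context {S : countType}.
Local Notation P := (Paths S).
Local Notation W := (@Wset S : set P).

Definition cylinder (k : nat) (b : nat -> option S) : set P :=
  [set w | forall i, (i <= k)%N -> w i = b i].

(* [setT] provides the finite cover required by [measure_unique]. *)
Definition cylinders : set (set P) :=
  [set C | C = setT \/ C = set0 \/ exists k b, C = cylinder k b].

Lemma cylinder0 b : cylinder 0 b = [set w | w 0%N = b 0%N].
Proof. by apply/seteqP; split => w /= h; [exact: h|case]. Qed.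

Lemma measurable_coord k c : measurable [set w : P | w k = c].
Proof. by apply: sub_sigma_algebra; exists k, c. Qed.

Lemma measurable_cylinder k b : measurable (cylinder k b).
Proof.
rewrite (_ : cylinder k b = \bigcap_(i in `I_k.+1) [set w | w i = b i]).
  by apply: bigcap_measurable => [|i _]; [exists 0%N|exact: measurable_coord].
apply/seteqP; split => w /= h i; first by rewrite /= ltnS; exact: h.
by rewrite -ltnS; exact: h.
Qed.

Lemma cylinderI_le k k' b b' : (k <= k')%N ->
  cylinder k b `&` cylinder k' b' = set0 \/
  cylinder k b `&` cylinder k' b' = cylinder k' b'.
Proof.
move=> kk'; have [bb'|bb'] := pselect (forall i, (i <= k)%N -> b i = b' i).
  right; apply/seteqP; split => [w [] //|w wb']; split => // i ik.
  by rewrite bb' // wb' // (leq_trans ik).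
left; apply/seteqP; split => // w [wb wb']; apply: bb' => i ik.
by rewrite -wb // wb' // (leq_trans ik).
Qed.

Lemma cylinders_setI_closed : setI_closed cylinders.
Proof.
move=> C C' [->|[->|[k [b ->]]]] [->|[->|[k' [b' ->]]]];
  rewrite ?setTI ?setIT ?set0I ?setI0; try by [left|right; left].
- by right; right; exists k', b'.
- by right; right; exists k, b.
- wlog kk' : k k' b b' / (k <= k')%N.
    move=> h; case: (leqP k k') => [|/ltnW]; first exact: h.
    by rewrite setIC; exact: h.
  case: (cylinderI_le b b' kk') => ->; first by right; left.
  by right; right; exists k', b'.
Qed.

Lemma measurable_cylindersE : measurable = <<s cylinders >>.
Proof.
apply/seteqP; split; last first.
  apply: smallest_sub; first exact: sigma_algebra_measurable.
  by move=> C [->|[->|[k [b ->]]]] //; exact: measurable_cylinder.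
apply: smallest_sub; first exact: smallest_sigma_algebra.
move=> _ [k [c ->]].
pose bs (s : seq (option S)) i := if (i < k)%N then nth None s i else c.
have -> : [set w : P | w k = c] =
    \bigcup_(s : seq (option S)) cylinder k (bs s).
  apply/seteqP; split => [w wk|w [s _ h]]; last by rewrite /= h // /bs ltnn.
  exists (mkseq w k) => // i ik; rewrite /bs.
  case: ltnP => ik'; first by rewrite nth_mkseq.
  by have -> : i = k by apply/eqP; rewrite eqn_leq ik.
apply: (@countable_bigcupT_measurable _ (g_sigma_algebraType cylinders)).
  exact: countableP.
by move=> s; apply: sub_sigma_algebra; right; right; exists k, (bs s).
Qed.

Lemma measurable_shiftp n : measurable_fun setT (shiftp n : P -> P).
Proof.
apply: (@measurability _ _ P P setT (shiftp n) (@cyl S)) => //.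
by move=> _ [_ [k [c ->]] <-]; rewrite setTI; exact: (measurable_coord (k + n)).
Qed.

Lemma cylinder_shiftp n k a b : b 0%N = a n ->
  cylinder n a `&` shiftp n @^-1` cylinder k b =
  cylinder (n + k) (splice n a b).
Proof.
move=> b0; apply/seteqP; split => [w [wa wb] i ink|w wab].
  rewrite /splice; case: ltnP => [/ltnW/wa //|ni].
  by have := wb (i - n)%N; rewrite /shiftp subnK //; apply; lia.
split => [i ni|i ik]; rewrite /shiftp wab /splice; try lia.
  case: ltnP => // ni'; have -> : i = n by lia.
  by rewrite subnn b0.
by rewrite ifN ?addnK //; lia.
Qed.

Lemma measurable_Wset : measurable W.
Proof.
pose C k := [set w : P | w k = None].
have -> : W = (\bigcap_k ~` C k) `|`
    \bigcup_a \bigcap_k (if (k <= a)%N then ~` C k else C k).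
  apply/seteqP; split => w.
    case=> [h|[a h]]; [left => k _ /h //|right; exists a => // k _].
    case: ifPn => ka /=; first exact/(h k).
    by apply: contra_notP (negP ka) => /(h k).
  case=> [h|[a _ h]]; [left => k; exact: h|right; exists a => k].
  by have := h k I; case: ifPn => ka /= hk; split => // wk; rewrite hk in wk.
apply: measurableU.
  apply: bigcapT_measurable => k.
  by apply: measurableC; exact: measurable_coord.
apply: bigcupT_measurable => a; apply: bigcapT_measurable => k.
by case: ifP => _; [apply: measurableC|]; exact: measurable_coord.
Qed.

Lemma Wset_None_le w j i : W w -> w j = None -> (j <= i)%N -> w i = None.
Proof.
case=> [h|[a h]] wj ji; first by case: (h j).
apply: contra_notP (fun ja => (h j).2 ja wj) => /(h i).1 ia.
exact: leq_trans ji ia.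
Qed.

Lemma Wset_head w : W w -> w 0%N <> None.
Proof. by case=> [h|[a h]]; [exact: h|exact/(h 0%N).2]. Qed.

Lemma Wset_shiftp n w : W w -> w n <> None -> W (shiftp n w).
Proof.
case=> [h|[a h]] wn; first by left => k; exact: h.
have na := (h n).1 wn.
right; exists (a - n)%N => k; rewrite /shiftp.
by split => [/(h _).1|kan]; [lia|apply/(h _).2; lia].
Qed.

Lemma Wset_unshiftp n w :
  W (shiftp n w) -> (forall i, (i <= n)%N -> w i <> None) -> W w.
Proof.
rewrite /shiftp; case=> [h|[a h]] wn.
  left => k; case: (leqP k n) => [|/ltnW kn]; first exact: wn.
  by rewrite -(subnK kn); exact: h.
right; exists (a + n)%N => k; case: (leqP k n) => [kn|/ltnW kn].
  by split => // _; [lia|exact: wn].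
by rewrite -(subnK kn) leq_add2r; exact: h.
Qed.

Lemma Wset_cylinder_cases k b : W `&` cylinder k b = set0 \/
  (exists f : nat -> S, forall i, (i <= k)%N -> b i = Some (f i)) \/
  (exists j (f : nat -> S), [/\ (j < k)%N,
     forall i, (i <= j)%N -> b i = Some (f i) &
     forall i, (j < i <= k)%N -> b i = None]).
Proof.
have [->|/set0P[w [Ww wb]]] := eqVneq (W `&` cylinder k b) set0; first by left.
right; case E0: (w 0%N) => [s0|]; last by case: (Wset_head Ww).
pose f i := odflt s0 (w i).
have wf i : w i <> None -> w i = Some (f i) by rewrite /f; case: (w i).
case: (Ww) => [h|[a h]].
  by left; exists f => i ik; rewrite -wb // wf.
case: (leqP k a) => ka.
  by left; exists f => i ik; rewrite -wb // wf //; apply/(h i).2; lia.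
right; exists a, f; split => // [i ia|i /andP[ai ik]]; rewrite -wb //; try lia.
  exact/wf/(h i).2.
by apply: contra_notP (negP (negbT (ltn_geF ai))) => /(h i).1.
Qed.

End path_space.

Section kuznetsov_cylinders.
Variables (R : realType) (S : countType) (q : S -> S -> R) (nu : S -> R)
  (K : {measure set (Paths S) -> \bar R}).
Hypothesis hK : is_kuznetsov q nu K.
Local Notation P := (Paths S).
Local Notation W := (@Wset S : set P).

Lemma kuznetsov_cylinder_alive k b (f : nat -> S) :
  (forall i, (i <= k)%N -> b i = Some (f i)) ->
  K (W `&` cylinder k b) = (nu (f k))%:E * (pathprod q k f)%:E.
Proof.
move=> bf; rewrite -hK.2; congr (K (_ `&` _)).
apply/seteqP; split => w wb i ik; first by rewrite /X wb // bf.
by rewrite bf // -wb.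
Qed.

Lemma kuznetsov_cylinder_killed k b j (f : nat -> S) : (j < k)%N ->
  (forall i, (i <= j)%N -> b i = Some (f i)) ->
  (forall i, (j < i <= k)%N -> b i = None) ->
  K (W `&` cylinder k b) = nupot q nu (f j) * (pathprod q j f)%:E.
Proof.
move=> jk bf bN; rewrite -hK.1; congr (K _); apply/seteqP; split => w [Ww wb].
  split => //; split => [i ij|]; rewrite /X wb.
  all: try lia.
  - by rewrite bf.
  - by rewrite bN //; lia.
split => // i ik; case: (leqP i j) => [ij|ji]; first by rewrite bf // -wb.1.
by rewrite bN ?ji ?ik // (Wset_None_le Ww wb.2).
Qed.

Lemma kuznetsov_X0_lty y : K (W `&` [set w | w 0%N = Some y]) < +oo.
Proof.
rewrite -(cylinder0 (fun=> Some y)).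
rewrite (kuznetsov_cylinder_alive (f := fun=> y)) //.
by rewrite -EFinM ltry.
Qed.

Lemma kuznetsov_cylinder_splice n (u : nat -> S) k b : b 0%N = Some (u n) ->
  K (W `&` cylinder (n + k) (splice n (Some \o u) b)) =
  (pathprod q n u)%:E * K (W `&` cylinder k b).
Proof.
move=> b0.
have shiftW : W `&` cylinder (n + k) (splice n (Some \o u) b)
    `<=` shiftp n @^-1` (W `&` cylinder k b).
  rewrite -cylinder_shiftp // => w [Ww [wu wb]]; split => //.
  by apply: Wset_shiftp Ww _; rewrite wu.
have spliceS (f : nat -> S) m : (forall i, (i <= m)%N -> b i = Some (f i)) ->
    forall i, (i <= n + m)%N ->
    splice n (Some \o u) b i = Some (splice n u f i).
  move=> bf i im; rewrite /splice; case: ltnP => // ni.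
  by apply: bf; lia.
case: (Wset_cylinder_cases k b) => [E|[[f bf]|[j [f [jk bf bN]]]]].
- rewrite E measure0 mule0.
  by move: shiftW; rewrite E preimage_set0 subset0 => ->; rewrite measure0.
- have f0 : f 0%N = u n by move: (bf 0%N isT); rewrite b0 => -[].
  rewrite (kuznetsov_cylinder_alive bf).
  rewrite (kuznetsov_cylinder_alive (spliceS _ _ bf)).
  rewrite splice_ge ?leq_addr // addKn pathprod_splice // EFinM.
  by rewrite muleCA.
- have f0 : f 0%N = u n by move: (bf 0%N isT); rewrite b0 => -[].
  rewrite (kuznetsov_cylinder_killed jk bf bN).
  rewrite (@kuznetsov_cylinder_killed _ _ (n + j) (splice n u f)).
  + by rewrite splice_ge ?leq_addr // addKn pathprod_splice // EFinM muleCA.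
  + by rewrite ltn_add2l.
  + exact: spliceS.
  + by move=> i /andP[ji ik]; rewrite splice_ge ?bN //; lia.
Qed.

End kuznetsov_cylinders.

Section kuznetsov_markov.
Variables (R : realType) (S : countType) (q : S -> S -> R) (nu : S -> R)
  (K : {measure set (Paths S) -> \bar R}).
Hypotheses (hK : is_kuznetsov q nu K) (hq : forall x y, (0 <= q x y)%R).
Local Notation P := (Paths S).
Local Notation W := (@Wset S : set P).
Variables (n : nat) (u : nat -> S).

Let D1 := W `&` cylinder n (Some \o u).
Let D2 := W `&` [set w : P | w 0%N = Some (u n)].

Let mD1 : measurable D1.
Proof. exact: measurableI measurable_Wset (measurable_cylinder _ _). Qed.

Let mD2 : measurable D2.
Proof. exact: measurableI measurable_Wset (measurable_coord _ _). Qed.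

Let c : {nonneg R} := NngNum (pathprod_ge0 n u hq).

Let K_D1 : K D1 = (nu (u n))%:E * (pathprod q n u)%:E.
Proof. exact: kuznetsov_cylinder_alive. Qed.

Let K_D2 : K D2 = (nu (u n))%:E.
Proof.
rewrite /D2 -(cylinder0 (fun=> Some (u n))).
rewrite (kuznetsov_cylinder_alive hK (f := fun=> u n)) //.
by rewrite /pathprod big_ord0 mule1.
Qed.

Let agree_on_cylinders C : cylinders C ->
  K (shiftp n @^-1` C `&` D1) = c%:num%:E * K (C `&` D2).
Proof.
case=> [->|[->|[k [b ->]]]].
- by rewrite preimage_setT !setTI K_D1 K_D2 muleC.
- by rewrite preimage_set0 !set0I !measure0 mule0.
have [b0|b0] := eqVneq (b 0%N) (Some (u n)); last first.
  suff [-> ->] : shiftp n @^-1` cylinder k b `&` D1 = set0 /\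
                cylinder k b `&` D2 = set0.
    by rewrite !measure0 mule0.
  split; apply/seteqP; split => // w [wb [_ wu]]; move/eqP: b0; apply.
    by rewrite -(wb 0%N) // /shiftp add0n wu.
  by rewrite -wb.
rewrite setIC -setIA cylinder_shiftp // (kuznetsov_cylinder_splice hK) //.
congr (_ * K _); apply/seteqP; split => [w [Ww wb]|w [wb [Ww _]]] //.
by split => //; split; rewrite //= wb.
Qed.

Let cover : \bigcup_(k : nat) [set: P] = [set: P].
Proof. by apply/seteqP; split => // w _; exists 0%N. Qed.

Lemma kuznetsov_shiftp_cylinder A : measurable A ->
  K (shiftp n @^-1` A `&` D1) = (pathprod q n u)%:E * K (A `&` D2).
Proof.
move=> mA; apply: (measure_unique cylinders (fun=> setT) measurable_cylindersE
  cylinders_setI_closed (fun=> or_introl erefl) cover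
  (pushforward (mrestr K mD1) (shiftp n)) (mscale c (mrestr K mD2))
  agree_on_cylinders _ A mA);
  first exact: measurable_shiftp.
move=> ? _; change (K (shiftp n @^-1` setT `&` D1) < +oo).
by rewrite preimage_setT setTI K_D1 -EFinM ltry.
Qed.

End kuznetsov_markov.

Section path_events.
Variables (R : realType) (S : countType) (q : S -> S -> R) (nu : S -> R)
  (K : {measure set (Paths S) -> \bar R}).
Hypotheses (hK : is_kuznetsov q nu K) (hq : forall x y, (0 <= q x y)%R).
Local Notation P := (Paths S).
Local Notation W := (@Wset S : set P).
Variables (n : nat) (x : S) (A : set P).
Hypotheses (mA : measurable A) (AW : A `<=` W).

Definition path_event (t : 'I_n.+1 -> S) : set P :=
  [set w | A (shiftp n w) /\ X n w = Some x /\
           forall j : 'I_n.+1, X (n - j) w = Some (t j)].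

Definition Qxn_weight (t : 'I_n.+1 -> S) : \bar R :=
  if `[< t ord0 = x >] then
    (\prod_(i < n) q (t (inord i)) (t (inord i.+1)))%:E
  else 0.

Lemma Qxn_weight_ge0 t : 0 <= Qxn_weight t.
Proof.
rewrite /Qxn_weight; case: ifP => // _.
by rewrite lee_fin; apply: prodr_ge0 => i _; exact: hq.
Qed.

Lemma path_event0 t : t ord0 <> x -> path_event t = set0.
Proof.
move=> tx; apply/seteqP; split => // w [_ [wn /(_ ord0)]].
by rewrite subn0 wn => -[/esym].
Qed.

Lemma path_eventE t : t ord0 = x -> path_event t =
  shiftp n @^-1` A `&`
  (W `&` cylinder n (Some \o (fun i => t (inord (n - i))))).
Proof.
move=> tx; apply/seteqP; split => [w [Aw [wn wt]]|w [Aw [Ww wt]]].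
  have wt' : cylinder n (Some \o (fun i => t (inord (n - i)))) w.
    move=> i ni; have := wt (inord (n - i)); rewrite /X inordK; last by lia.
    by rewrite subKn.
  by split => //; split => //; apply: (Wset_unshiftp (AW Aw)) => i /wt' ->.
split => //; split => [|j]; rewrite /X wt //=; try lia.
  by rewrite subnn -tx; congr (Some (t _)); apply: val_inj; rewrite /= inordK.
congr (Some (t _)); apply: val_inj; rewrite /= inordK; last by lia.
by rewrite subKn // -ltnS.
Qed.

Lemma measurable_path_event t : measurable (path_event t).
Proof.
have [tx|tx] := pselect (t ord0 = x); last by rewrite path_event0.
rewrite path_eventE //; apply: measurableI.
  by rewrite -[X in measurable X]setTI; exact: measurable_shiftp.
exact: measurableI measurable_Wset (measurable_cylinder _ _).
Qed.

Lemma trivIset_path_event (B : set ('I_n.+1 -> S)) : trivIset B path_event.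
Proof.
apply/trivIsetP => t t' _ _ tt'; apply/seteqP.
split => // w [[_ [_ wt]] [_ [_ wt']]].
by move/eqP: tt'; apply; apply/funext => j; move: (wt j); rewrite wt' => -[].
Qed.

Lemma kuznetsov_path_event t :
  K (path_event t) = K (A `&` [set w | X 0 w = Some x]) * Qxn_weight t.
Proof.
rewrite /Qxn_weight; have [tx|tx] := pselect (t ord0 = x); last first.
  by rewrite path_event0 // asboolF // measure0 mule0.
rewrite asboolT // path_eventE // (kuznetsov_shiftp_cylinder hK hq) // muleC.
rewrite pathprod_rev subnn; congr (K _ * _); apply/seteqP.
have t0 : t (inord 0) = x.
  by rewrite -tx; congr t; apply: val_inj; rewrite /= inordK.
by rewrite t0; split => [w [Aw [_ w0]]|w [Aw w0]]; do ?split => //; exact: AW.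
Qed.

Lemma kuznetsov_X0_fin_num : K (A `&` [set w | X 0 w = Some x]) \is a fin_num.
Proof.
rewrite ge0_fin_numE //; apply: le_lt_trans (kuznetsov_X0_lty hK x).
apply: le_measure; rewrite ?inE.
- exact: measurableI mA (measurable_coord _ _).
- exact: measurableI measurable_Wset (measurable_coord _ _).
- by move=> w [Aw w0]; split => //; exact: AW.
Qed.

End path_events.

Theorem mainTheorem8 (R : realType) (S : countType) (q : S -> S -> R)
  (nu : S -> R) (K : {measure set (Paths S) -> \bar R})
  (hq : forall x y : S, (0 <= q x y)%R)
  (hG : forall x y : S, green q x y < +oo)
  (hnu : excessive q nu)
  (hK : is_kuznetsov q nu K)
  (A : set (Paths S)) (mA : measurable A) (AW : A `<=` @Wset S)
  (n : nat) (hn : (0 < n)%N) (B : set ('I_n.+1 -> S)) (x : S) :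
  K [set w | A (shiftp n w) /\ X n w = Some x /\
             exists2 t, B t & forall j : 'I_n.+1, X (n - j) w = Some (t j)]
  = K (A `&` [set w | X 0 w = Some x]) * Qxn q x B.
Proof.
(* Only the cylinder values of K enter: [hG] and [hnu] are needed for the
   existence of K^nu, not for this identity, which also holds for n = 0. *)
rewrite (_ : [set w | _] = \bigcup_(t in B) path_event x A t); last first.
  apply/seteqP; split => [w [Aw [wn [t Bt wt]]]|w [t Bt [Aw [wn wt]]]].
    by exists t.
  by split => //; split => //; exists t.
rewrite measure_bigcup_countable; last 3 first.
- exact: countable_fin_fun.
- by move=> t _; exact: measurable_path_event.
- exact: trivIset_path_event.
under eq_esum => t _ do rewrite (kuznetsov_path_event hK hq x mA AW).
have c_fin := kuznetsov_X0_fin_num hK x mA AW.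
by rewrite -(fineK c_fin) esumZl // => t _; exact: Qxn_weight_ge0.
Qed.
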